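(* Consider $CP(N)$ with multiplicative rates $\psi(i,j)=2ij$, started from $(N,0,\dots,0)$. Define functions $b_k(t)$, $t\ge0$, $k\ge1$, by $b_1(t)=e^t$ and $$b_k(t)=k\,e^{k^2t}\int_0^t e^{-k^2u}\sum_{i+j=k}b_i(u)b_j(u)\,du,\qquad k\ge2,$$ (sum over ordered pairs of positive integers). These functions do not depend on $N$, and for every $N\ge1$, $t\ge0$ and $\eta=(n_1,\dots,n_N)\in\Omega_N$, $$\mathbb P(X_N^{(\rho)}(t)=\eta)=N!\,e^{-N^2t}\prod_{k=1}^N\frac{(b_k(t))^{n_k}}{k^{n_k}n_k!}.$$
   Context: $\Omega_N$ is the set of partitions $\eta=(n_1,\dots,n_N)$ of $N$ ($\sum_k kn_k=N$). $CP(N)$ is the continuous-time Markov chain on $\Omega_N$ where any two distinct clusters of sizes $i,j$ merge into one of size $i+j$ at rate $\psi(i,j)$; the transition $\eta\to\eta^{(i,j)}$ has rate $n_in_j\psi(i,j)$ for $i\neq j$ and $\frac{n_i(n_i-1)}2\psi(i,i)$ for $i=j$. *)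

From Stdlib Require Import Reals Lra Lia List Arith.
Import ListNotations.
Open Scope R_scope.

Fixpoint sumR (f : nat -> R) (n : nat) : R :=
  match n with O => 0 | S n' => sumR f n' + f n' end.
Fixpoint prodR (f : nat -> R) (n : nat) : R :=
  match n with O => 1 | S n' => prodR f n' * f n' end.

(* A state eta = (n_1,...,n_N) is the list [n_1; ...; n_N];
   n_k = nth (k-1) eta 0. *)
Definition nk (eta : list nat) (k : nat) : nat := nth (k - 1) eta 0%nat.

Definition weight (eta : list nat) : nat :=
  fold_right Nat.add 0%nat (map (fun k => k * nk eta k)%nat (seq 1 (length eta))).

Definition in_Omega (N : nat) (eta : list nat) : Prop :=
  length eta = N /\ weight eta = N.

Fixpoint all_lists (n m : nat) : list (list nat) :=
  match n with
  | O => [[]]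
  | S n' => flat_map (fun x => map (cons x) (all_lists n' m)) (seq 0 (S m))
  end.

Definition Omega (N : nat) : list (list nat) :=
  filter (fun eta => Nat.eqb (weight eta) N) (all_lists N N).

Definition sum_list (l : list (list nat)) (f : list nat -> R) : R :=
  fold_right Rplus 0 (map f l).

Fixpoint modify (f : nat -> nat) (k : nat) (l : list nat) : list nat :=
  match l, k with
  | [], _ => []
  | x :: l', O => f x :: l'
  | x :: l', S k' => x :: modify f k' l'
  end.

(* eta^{(i,j)}: one cluster of size i and one of size j merge into size i+j *)
Definition merge (eta : list nat) (i j : nat) : list nat :=
  modify S (i + j - 1) (modify pred (j - 1) (modify pred (i - 1) eta)).

(* rate of eta -> eta^{(i,j)}, for i <= j *)
Definition rate (psi : nat -> nat -> R) (eta : list nat) (i j : nat) : R :=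
  if Nat.eq_dec i j
  then INR (nk eta i) * (INR (nk eta i) - 1) / 2 * psi i i
  else INR (nk eta i) * INR (nk eta j) * psi i j.

Definition pair_ok (N i j : nat) : bool :=
  (Nat.leb 1 i && Nat.leb i j && Nat.leb (i + j) N)%bool.

Definition sum_pairs (N : nat) (F : nat -> nat -> R) : R :=
  sumR (fun i => sumR (fun j => if pair_ok N i j then F i j else 0) (S N)) (S N).

Definition ind_eq (a b : list nat) : R :=
  if list_eq_dec Nat.eq_dec a b then 1 else 0.

Definition Qgen (psi : nat -> nat -> R) (N : nat) (xi eta : list nat) : R :=
  sum_pairs N (fun i j => rate psi xi i j * ind_eq (merge xi i j) eta)
  - ind_eq xi eta * sum_pairs N (fun i j => rate psi xi i j).

Definition init_state (N : nat) : list nat := N :: repeat 0%nat (N - 1).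

(* p t eta = P(X_N(t) = eta): the transition probabilities from the initial
   state, characterised as the (unique) solution of the Kolmogorov forward
   equations p' = p Q on the finite state space Omega_N, p(0) = delta_init. *)
Definition is_law (psi : nat -> nat -> R) (N : nat) (eta0 : list nat)
  (p : R -> list nat -> R) : Prop :=
  (forall eta, In eta (Omega N) -> p 0 eta = ind_eq eta eta0) /\
  (forall eta t, In eta (Omega N) ->
     derivable_pt_lim (fun s => p s eta) t
       (sum_list (Omega N) (fun xi => p t xi * Qgen psi N xi eta))).

Definition psi_mult (i j : nat) : R := 2 * INR i * INR j.

Definition b_integrand (b : nat -> R -> R) (k : nat) (u : R) : R :=
  exp (- (INR k ^ 2) * u) *
  sumR (fun i => if Nat.leb 1 i then b i u * b (k - i)%nat u else 0) k.

Definition is_b (b : nat -> R -> R) : Prop :=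
  (forall t, 0 <= t -> b 1%nat t = exp t) /\
  (forall k t, (2 <= k)%nat -> 0 <= t ->
     exists pr : Riemann_integrable (b_integrand b k) 0 t,
       b k t = INR k * exp (INR k ^ 2 * t) * RiemannInt pr).

From Stdlib Require Import Reals Lra Lia List Arith Bool Classical.
Import ListNotations.
Open Scope R_scope.

(* Write [q t eta] for the right-hand side.  For [t > 0] the integral equations give
   [b_k' = k^2 b_k + k sum_(i+j=k) b_i b_j].  Differentiating the product, the [k^2 b_k]
   terms contribute [q * sum_k k^2 n_k], which together with the factor [exp (-N^2 t)] gives
   [-q] times the total jump rate [sum_(i<=j) rate = N^2 - sum_k k^2 n_k] (expand
   [(sum_k k n_k)^2 = N^2]); the convolution terms reproduce the inflow from the states in
   which the cluster of size [i + j] is split into clusters of sizes [i] and [j].  So [q]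
   solves the forward equation on the finite set [Omega N]; it starts from the point mass
   at [(N,0,...,0)] because [b_1 0 = 1] and [b_k 0 = 0] for [k >= 2].  Solutions of a linear
   system with given initial value are unique (the energy [E = sum_eta (p - q)^2] satisfies
   [E' <= K E]), hence [p = q]. *)

(** * Finite sums and products *)

Lemma sumR_S f n : sumR f (S n) = sumR f n + f n.
Proof. reflexivity. Qed.

Lemma sumR_shift f n : sumR f (S n) = f 0%nat + sumR (fun k => f (S k)) n.
Proof. induction n; simpl in *; [ring|]. rewrite IHn. ring. Qed.

Lemma sumR_ext f g n : (forall i, (i < n)%nat -> f i = g i) -> sumR f n = sumR g n.
Proof.
  induction n; intros H; simpl; auto.
  rewrite IHn, H; auto; intros; apply H; lia.
Qed.

Lemma sumR_plus f g n : sumR (fun i => f i + g i) n = sumR f n + sumR g n.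
Proof. induction n; simpl; [lra|]. rewrite IHn; lra. Qed.

Lemma sumR_scal c f n : sumR (fun i => c * f i) n = c * sumR f n.
Proof. induction n; simpl; [lra|]. rewrite IHn; lra. Qed.

Lemma sumR_scal_r c f n : sumR (fun i => f i * c) n = sumR f n * c.
Proof. induction n; simpl; [lra|]. rewrite IHn; lra. Qed.

Lemma sumR_zero f n : (forall i, (i < n)%nat -> f i = 0) -> sumR f n = 0.
Proof.
  induction n; intros H; simpl; auto.
  rewrite IHn, H; [ring | lia | intros; apply H; lia].
Qed.

Lemma sumR_single (g : nat -> R) c n : (c < n)%nat ->
  sumR (fun j => if Nat.eq_dec j c then g j else 0) n = g c.
Proof.
  induction n; intros H; [lia|]. simpl.
  destruct (Nat.eq_dec n c).
  - subst. rewrite sumR_zero; [destruct (Nat.eq_dec c c); [lra|lia]|].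
    intros i Hi. destruct (Nat.eq_dec i c); [lia|auto].
  - destruct (Nat.eq_dec n c); [lia|]. rewrite IHn; [lra|lia].
Qed.

Lemma sumR_nonneg f n : (forall i, (i < n)%nat -> 0 <= f i) -> 0 <= sumR f n.
Proof.
  induction n; intros H; simpl; [lra|].
  pose proof (H n ltac:(lia)). assert (0 <= sumR f n) by (apply IHn; intros; apply H; lia). lra.
Qed.

Lemma sumR_ge_one f n a : (forall i, (i < n)%nat -> 0 <= f i) -> (a < n)%nat -> f a <= sumR f n.
Proof.
  induction n; intros H Ha; [lia|]. rewrite sumR_S.
  assert (0 <= sumR f n) by (apply sumR_nonneg; intros; apply H; lia).
  destruct (Nat.eq_dec a n); [subst; lra|].
  assert (f a <= sumR f n) by (apply IHn; [intros; apply H; lia | lia]).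
  pose proof (H n ltac:(lia)). lra.
Qed.

Lemma sumR_ge_two f n a c : (forall i, (i < n)%nat -> 0 <= f i) -> (a < n)%nat -> (c < n)%nat -> a <> c ->
  f a + f c <= sumR f n.
Proof.
  induction n; intros H Ha Hc Hac; [lia|]. rewrite sumR_S.
  destruct (Nat.eq_dec a n).
  - subst. pose proof (sumR_ge_one f n c ltac:(intros; apply H; lia) ltac:(lia)). lra.
  - destruct (Nat.eq_dec c n).
    + subst. pose proof (sumR_ge_one f n a ltac:(intros; apply H; lia) ltac:(lia)). lra.
    + pose proof (IHn ltac:(intros; apply H; lia) ltac:(lia) ltac:(lia) Hac). pose proof (H n ltac:(lia)). lra.
Qed.

Lemma sumR_abs_bound f n c : (forall i, (i < n)%nat -> Rabs (f i) <= c) -> Rabs (sumR f n) <= INR n * c.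
Proof.
  induction n; intros H; simpl sumR.
  - simpl; rewrite Rabs_R0; lra.
  - rewrite S_INR. eapply Rle_trans; [apply Rabs_triang|].
    assert (Rabs (sumR f n) <= INR n * c) by (apply IHn; intros; apply H; lia).
    assert (Rabs (f n) <= c) by (apply H; lia). lra.
Qed.

Definition pair_mult (i j : nat) : R := if Nat.eq_dec i j then 1 else 2.

Lemma sumR_sym (h : nat -> nat -> R) M : (forall i j, h i j = h j i) ->
  sumR (fun i => sumR (fun j => h i j) M) M =
  sumR (fun i => sumR (fun j => if Nat.leb i j then pair_mult i j * h i j else 0) M) M.
Proof.
  intros Hs. induction M; [reflexivity|].
  assert (L : sumR (fun i => sumR (fun j => h i j) (S M)) (S M) =
     sumR (fun i => sumR (fun j => h i j) M) M + sumR (fun i => h i M) M + (sumR (fun j => h M j) M + h M M)).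
  { rewrite sumR_S. rewrite (sumR_ext _ (fun i => sumR (fun j => h i j) M + h i M)) by (intros; reflexivity).
    rewrite sumR_plus. rewrite sumR_S. ring. }
  set (r := fun i j => if Nat.leb i j then pair_mult i j * h i j else 0).
  assert (R : sumR (fun i => sumR (fun j => r i j) (S M)) (S M) =
     sumR (fun i => sumR (fun j => r i j) M) M + sumR (fun i => r i M) M + (sumR (fun j => r M j) M + r M M)).
  { rewrite sumR_S. rewrite (sumR_ext _ (fun i => sumR (fun j => r i j) M + r i M)) by (intros; reflexivity).
    rewrite sumR_plus. rewrite sumR_S. ring. }
  change (sumR (fun i => sumR (fun j => h i j) (S M)) (S M) = sumR (fun i => sumR (fun j => r i j) (S M)) (S M)).
  rewrite L, R, IHM. fold r.
  rewrite (sumR_ext (fun i => r i M) (fun i => 2 * h i M)).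
  2:{ intros i Hi. unfold r, pair_mult. assert (Nat.leb i M = true) by (apply Nat.leb_le; lia).
      rewrite H. destruct (Nat.eq_dec i M); [lia|auto]. }
  rewrite (sumR_zero (fun j => r M j)).
  2:{ intros j Hj. unfold r. assert (Nat.leb M j = false) by (apply Nat.leb_gt; lia). rewrite H; auto. }
  rewrite sumR_scal. rewrite (sumR_ext (fun j => h M j) (fun j => h j M)) by (intros; apply Hs).
  unfold r, pair_mult. rewrite Nat.leb_refl. destruct (Nat.eq_dec M M); [|lia]. ring.
Qed.

Lemma sumR_antidiag (G : nat -> nat -> R) M :
  sumR (fun i => sumR (fun j => if Nat.ltb (i + j) M then G i j else 0) M) M =
  sumR (fun m => sumR (fun i => G i (m - i)%nat) (S m)) M.
Proof.
  induction M; [reflexivity|].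
  rewrite (sumR_S (fun m => sumR (fun i => G i (m - i)%nat) (S m))), <- IHM.
  rewrite (sumR_ext (fun i => sumR (fun j => if Nat.ltb (i + j) (S M) then G i j else 0) (S M))
     (fun i => sumR (fun j => if Nat.ltb (i + j) M then G i j else 0) (S M) +
               sumR (fun j => if Nat.eq_dec j (M - i) then G i j else 0) (S M))).
  - rewrite sumR_plus. f_equal.
    + rewrite sumR_S. rewrite (sumR_ext (fun i => sumR (fun j => if Nat.ltb (i + j) M then G i j else 0) (S M))
         (fun i => sumR (fun j => if Nat.ltb (i + j) M then G i j else 0) M)).
      * rewrite (sumR_zero (fun j => if Nat.ltb (M + j) M then G M j else 0)); [ring|].
        intros j Hj. assert (Nat.ltb (M + j) M = false) by (apply Nat.ltb_ge; lia). rewrite H; auto.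
      * intros i Hi. rewrite sumR_S. assert (Nat.ltb (i + M) M = false) by (apply Nat.ltb_ge; lia).
        rewrite H; ring.
    + apply sumR_ext. intros i Hi. rewrite sumR_single by lia. auto.
  - intros i Hi. rewrite <- sumR_plus. apply sumR_ext. intros j Hj.
    destruct (Nat.ltb (i + j) (S M)) eqn:E1, (Nat.ltb (i + j) M) eqn:E2, (Nat.eq_dec j (M - i));
      apply Nat.ltb_lt in E1 || apply Nat.ltb_ge in E1;
      apply Nat.ltb_lt in E2 || apply Nat.ltb_ge in E2; try lia; try ring.
Qed.

Lemma sumR_continuity_pt (F : R -> nat -> R) n t :
  (forall i, (i < n)%nat -> continuity_pt (fun s => F s i) t) ->
  continuity_pt (fun s => sumR (F s) n) t.
Proof.
  induction n; intros H; simpl.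
  - apply continuity_pt_const. intros ? ?; reflexivity.
  - apply (continuity_pt_plus (fun s => sumR (F s) n) (fun s => F s n)).
    + apply IHn; intros; apply H; lia.
    + apply H; lia.
Qed.

Lemma prodR_ext f g n : (forall i, (i < n)%nat -> f i = g i) -> prodR f n = prodR g n.
Proof.
  induction n; intros H; simpl; auto.
  rewrite IHn, H; auto; intros; apply H; lia.
Qed.

Lemma prodR_split f n m : (m < n)%nat ->
  prodR f n = f m * prodR (fun k => if Nat.eq_dec k m then 1 else f k) n.
Proof.
  induction n; intros H; [lia|]. simpl.
  destruct (Nat.eq_dec n m).
  - subst. rewrite (prodR_ext (fun k => if Nat.eq_dec k m then 1 else f k) f); [ring|].
    intros i Hi; destruct (Nat.eq_dec i m); [lia|auto].
  - rewrite (IHn ltac:(lia)). ring.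
Qed.

Lemma prodR_zero f n m : (m < n)%nat -> f m = 0 -> prodR f n = 0.
Proof. intros H H0. rewrite (prodR_split f n m H), H0. ring. Qed.

Lemma prodR_one f n : (forall i, (i < n)%nat -> f i = 1) -> prodR f n = 1.
Proof. induction n; intros H; simpl; auto. rewrite IHn, H; try lra; try lia. intros; apply H; lia. Qed.

Lemma prodR_continuity_pt (F : R -> nat -> R) n t :
  (forall i, (i < n)%nat -> continuity_pt (fun s => F s i) t) ->
  continuity_pt (fun s => prodR (F s) n) t.
Proof.
  induction n; intros H; simpl.
  - apply continuity_pt_const. intros ? ?; reflexivity.
  - apply (continuity_pt_mult (fun s => prodR (F s) n) (fun s => F s n)).
    + apply IHn; intros; apply H; lia.
    + apply H; lia.
Qed.

Lemma prodR_derivable_pt_lim (F : R -> nat -> R) (F' : nat -> R) n t :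
  (forall i, (i < n)%nat -> derivable_pt_lim (fun s => F s i) t (F' i)) ->
  derivable_pt_lim (fun s => prodR (F s) n) t
    (sumR (fun m => prodR (fun k => if Nat.eq_dec k m then F' k else F t k) n) n).
Proof.
  induction n; intros H; simpl.
  - apply derivable_pt_lim_const.
  - replace (sumR (fun m => prodR (fun k => if Nat.eq_dec k m then F' k else F t k) n *
                (if Nat.eq_dec n m then F' n else F t n)) n +
             prodR (fun k => if Nat.eq_dec k n then F' k else F t k) n *
             (if Nat.eq_dec n n then F' n else F t n))
      with (sumR (fun m => prodR (fun k => if Nat.eq_dec k m then F' k else F t k) n) n * F t n
            + prodR (F t) n * F' n).
    + apply (derivable_pt_lim_mult (fun s => prodR (F s) n) (fun s => F s n)).
      * apply IHn; intros; apply H; lia.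
      * apply H; lia.
    + rewrite <- sumR_scal_r. f_equal.
      * apply sumR_ext; intros i Hi. destruct (Nat.eq_dec n i); [lia|auto].
      * destruct (Nat.eq_dec n n); [|lia]. f_equal. apply prodR_ext; intros i Hi.
        destruct (Nat.eq_dec i n); [lia|auto].
Qed.

Definition prodR_off (ps : list nat) (f : nat -> R) (n : nat) : R :=
  prodR (fun k => if in_dec Nat.eq_dec k ps then 1 else f k) n.

Lemma prodR_off_nil f n : prodR_off [] f n = prodR f n.
Proof. reflexivity. Qed.

Lemma prodR_off_cons a ps f n : (a < n)%nat -> ~ In a ps ->
  prodR_off ps f n = f a * prodR_off (a :: ps) f n.
Proof.
  intros Ha Hps. unfold prodR_off. rewrite (prodR_split _ n a Ha).
  destruct (in_dec Nat.eq_dec a ps); [contradiction|]. f_equal.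
  apply prodR_ext. intros k Hk. destruct (Nat.eq_dec k a) as [->|Hka].
  - destruct (in_dec Nat.eq_dec a (a :: ps)) as [|Hn]; [reflexivity|]. exfalso; apply Hn; left; auto.
  - destruct (in_dec Nat.eq_dec k ps), (in_dec Nat.eq_dec k (a :: ps)) as [Hin|Hin]; auto.
    + exfalso; apply Hin; right; auto.
    + destruct Hin; [congruence|contradiction].
Qed.

Lemma prodR_off_ext ps f g n : (forall k, (k < n)%nat -> ~ In k ps -> f k = g k) ->
  prodR_off ps f n = prodR_off ps g n.
Proof.
  intros H. unfold prodR_off. apply prodR_ext. intros k Hk.
  destruct (in_dec Nat.eq_dec k ps); auto.
Qed.

Lemma prodR_update f n a v : (a < n)%nat ->
  prodR (fun k => if Nat.eq_dec k a then v else f k) n = v * prodR_off [a] f n.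
Proof.
  intros Ha. rewrite <- prodR_off_nil, (prodR_off_cons a) by (auto; intros []).
  destruct (Nat.eq_dec a a); [|lia]. f_equal.
  apply prodR_off_ext. intros k _ Hk. destruct (Nat.eq_dec k a); [subst; exfalso; apply Hk; left|]; auto.
Qed.

Lemma sum_list_cons a l f : sum_list (a :: l) f = f a + sum_list l f.
Proof. reflexivity. Qed.

Lemma sum_list_ext l f g : (forall x, In x l -> f x = g x) -> sum_list l f = sum_list l g.
Proof.
  induction l as [|a l IH]; intros H; [reflexivity|].
  rewrite !sum_list_cons, H, IH; simpl; auto; intros; apply H; simpl; auto.
Qed.

Lemma sum_list_plus l f g : sum_list l (fun x => f x + g x) = sum_list l f + sum_list l g.
Proof. induction l; unfold sum_list in *; simpl; [lra|]. rewrite IHl; lra. Qed.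

Lemma sum_list_scal l c f : sum_list l (fun x => c * f x) = c * sum_list l f.
Proof. induction l; unfold sum_list in *; simpl; [lra|]. rewrite IHl; lra. Qed.

Lemma sum_list_zero l : sum_list l (fun _ => 0) = 0.
Proof. induction l; unfold sum_list in *; simpl; [lra|]. rewrite IHl; lra. Qed.

Lemma sum_list_const l c : sum_list l (fun _ => c) = INR (length l) * c.
Proof. induction l; unfold sum_list in *; simpl length; [simpl; lra|].
  rewrite S_INR; simpl; rewrite IHl; lra. Qed.

Lemma sum_list_le l f g : (forall x, In x l -> f x <= g x) -> sum_list l f <= sum_list l g.
Proof.
  induction l as [|a l IH]; intros H; unfold sum_list in *; simpl; [lra|].
  apply Rplus_le_compat; [apply H; simpl; auto| apply IH; intros; apply H; simpl; auto].
Qed.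

Lemma sum_list_nonneg l f : (forall x, In x l -> 0 <= f x) -> 0 <= sum_list l f.
Proof. intros H. rewrite <- (sum_list_zero l). apply sum_list_le; auto. Qed.

Lemma sum_list_ge_term l f x : (forall y, In y l -> 0 <= f y) -> In x l -> f x <= sum_list l f.
Proof.
  induction l as [|a l IH]; intros H Hx; [destruct Hx|].
  rewrite sum_list_cons. destruct Hx as [<-|Hx].
  - assert (0 <= sum_list l f) by (apply sum_list_nonneg; intros; apply H; simpl; auto). lra.
  - assert (0 <= f a) by (apply H; simpl; auto).
    assert (f x <= sum_list l f) by (apply IH; auto; intros; apply H; simpl; auto). lra.
Qed.

Lemma sum_list_zero_each l f : (forall y, In y l -> 0 <= f y) -> sum_list l f = 0 -> forall x, In x l -> f x = 0.
Proof.
  intros H H0 x Hx. pose proof (sum_list_ge_term l f x H Hx). pose proof (H x Hx). lra.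
Qed.

Lemma sum_list_sumR (l : list (list nat)) (f : list nat -> nat -> R) n :
  sum_list l (fun x => sumR (fun i => f x i) n) = sumR (fun i => sum_list l (fun x => f x i)) n.
Proof.
  induction l as [|a l IH]; unfold sum_list in *; simpl.
  - symmetry; apply sumR_zero; auto.
  - rewrite IH, <- sumR_plus. reflexivity.
Qed.

Lemma sum_list_sumR2 (l : list (list nat)) (f : list nat -> nat -> nat -> R) n m :
  sum_list l (fun x => sumR (fun i => sumR (fun j => f x i j) m) n) =
  sumR (fun i => sumR (fun j => sum_list l (fun x => f x i j)) m) n.
Proof.
  rewrite (sum_list_sumR l (fun x i => sumR (fun j => f x i j) m)). apply sumR_ext. intros i _.
  apply (sum_list_sumR l (fun x j => f x i j)).
Qed.

Lemma sum_list_ind_eq_notin l e f : ~ In e l -> sum_list l (fun x => ind_eq x e * f x) = 0.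
Proof.
  induction l as [|a l IH]; intros He; [reflexivity|].
  rewrite sum_list_cons. unfold ind_eq at 1. destruct (list_eq_dec Nat.eq_dec a e).
  - subst. exfalso; apply He; simpl; auto.
  - rewrite IH; [ring|]. intros H; apply He; simpl; auto.
Qed.

Lemma sum_list_ind_eq l e f : NoDup l -> In e l -> sum_list l (fun x => ind_eq x e * f x) = f e.
Proof.
  induction l as [|a l IH]; intros Hn He; [destruct He|].
  inversion Hn; subst. rewrite sum_list_cons.
  unfold ind_eq at 1. destruct (list_eq_dec Nat.eq_dec a e).
  - subst. rewrite sum_list_ind_eq_notin; auto. ring.
  - destruct He as [He|He]; [congruence|]. rewrite IH; auto. ring.
Qed.

Lemma sum_list_derivable_pt_lim l (f : R -> list nat -> R) (f' : list nat -> R) t :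
  (forall x, In x l -> derivable_pt_lim (fun s => f s x) t (f' x)) ->
  derivable_pt_lim (fun s => sum_list l (fun x => f s x)) t (sum_list l f').
Proof.
  induction l as [|a l IH]; intros H.
  - unfold sum_list; simpl. apply derivable_pt_lim_const.
  - unfold sum_list; simpl.
    apply (derivable_pt_lim_plus (fun s => f s a) (fun s => fold_right Rplus 0 (map (fun x => f s x) l))).
    + apply H; simpl; auto.
    + apply IH; intros; apply H; simpl; auto.
Qed.

Lemma sum_list_continuity_pt l (f : R -> list nat -> R) t :
  (forall x, In x l -> continuity_pt (fun s => f s x) t) ->
  continuity_pt (fun s => sum_list l (fun x => f s x)) t.
Proof.
  induction l as [|a l IH]; intros H.
  - unfold sum_list; simpl. apply continuity_pt_const. intros ? ?; reflexivity.
  - unfold sum_list; simpl.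
    apply (continuity_pt_plus (fun s => f s a) (fun s => fold_right Rplus 0 (map (fun x => f s x) l))).
    + apply H; simpl; auto.
    + apply IH; intros; apply H; simpl; auto.
Qed.

Lemma derivable_pt_lim_exp_lin a c : derivable_pt_lim (fun s => exp (a * s)) c (a * exp (a * c)).
Proof.
  replace (a * exp (a * c)) with (exp (a * c) * (a * 1)) by ring.
  apply (derivable_pt_lim_comp (fun s => a * s) exp).
  - apply (derivable_pt_lim_scal (fun s => s)). apply derivable_pt_lim_id.
  - apply derivable_pt_lim_exp.
Qed.

Lemma derivable_pt_lim_div_const f l c t : derivable_pt_lim f t l -> derivable_pt_lim (fun s => f s / c) t (l / c).
Proof.
  intros H. replace (l / c) with (l * / c + f t * 0) by (unfold Rdiv; ring).
  apply (derivable_pt_lim_mult f (fun _ => / c)); auto. apply derivable_pt_lim_const.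
Qed.

Lemma exp_le_compat x y : x <= y -> exp x <= exp y.
Proof. intros [H|H]; [left; apply exp_increasing; auto| subst; lra]. Qed.

Lemma lipschitz_continuity_pt f x L : 0 <= L ->
  (forall s, Rabs (s - x) < 1 -> Rabs (f s - f x) <= L * Rabs (s - x)) -> continuity_pt f x.
Proof.
  intros HL H eps Heps. exists (Rmin 1 (eps / (L + 1))). split.
  - apply Rmin_pos; [lra|]. apply Rdiv_lt_0_compat; lra.
  - intros y [_ Hy]. simpl in *. unfold Rdist in *.
    assert (Hy1 : Rabs (y - x) < 1) by (eapply Rlt_le_trans; [apply Hy| apply Rmin_l]).
    assert (Hy2 : Rabs (y - x) < eps / (L + 1)) by (eapply Rlt_le_trans; [apply Hy| apply Rmin_r]).
    eapply Rle_lt_trans; [apply H; auto|].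
    pose proof (Rabs_pos (y - x)).
    apply Rle_lt_trans with ((L + 1) * Rabs (y - x)); [nra|].
    apply Rlt_le_trans with ((L + 1) * (eps / (L + 1))); [apply Rmult_lt_compat_l; lra|].
    right; field; lra.
Qed.

Lemma Rmax0_continuity_pt : continuity_pt (fun s => Rmax 0 s) 0.
Proof.
  apply (lipschitz_continuity_pt _ 0 1); [lra|]. intros s Hs. rewrite (Rmax_left 0 0) by lra. rewrite !Rminus_0_r.
  unfold Rmax; destruct (Rle_dec 0 s); rewrite ?Rabs_R0; unfold Rabs; destruct (Rcase_abs s); lra.
Qed.

(** * Uniqueness for linear systems *)

Lemma le_of_derivative_nonpos (F F' : R -> R) t : 0 <= t ->
  (forall c, 0 <= c <= t -> continuity_pt F c) ->
  (forall c, 0 < c < t -> derivable_pt_lim F c (F' c)) ->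
  (forall c, 0 < c < t -> F' c <= 0) ->
  F t <= F 0.
Proof.
  intros Ht HFc HFd HF'. destruct (Req_dec t 0) as [->|Htn]; [lra|].
  assert (pr1 : forall c, 0 < c < t -> derivable_pt F c) by (intros c Hc; exists (F' c); apply HFd; auto).
  assert (pr2 : forall c, 0 < c < t -> derivable_pt id c) by (intros; apply derivable_pt_id).
  assert (Hid : forall c, 0 <= c <= t -> continuity_pt id c)
    by (intros; apply derivable_continuous_pt, derivable_pt_id).
  destruct (MVT F id 0 t pr1 pr2 ltac:(lra) HFc Hid) as [c [Hc HMVT]].
  rewrite (derive_pt_eq_0 F c (F' c) (pr1 c Hc)) in HMVT by auto.
  rewrite (derive_pt_eq_0 id c 1 (pr2 c Hc)) in HMVT by apply derivable_pt_lim_id.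
  unfold id in HMVT. pose proof (HF' c Hc). nra.
Qed.

(* [exp (-K s) * E s] is nonincreasing. *)
Lemma gronwall_zero (E E' : R -> R) K t : 0 <= t ->
  (forall s, 0 <= E s) -> E 0 = 0 -> continuity_pt E 0 ->
  (forall c, 0 < c -> derivable_pt_lim E c (E' c)) ->
  (forall c, 0 < c -> E' c <= K * E c) ->
  E t = 0.
Proof.
  intros Ht HEpos HE0 HEc HEd HEb.
  set (F := fun s => exp (- K * s) * E s).
  assert (HFd : forall c, 0 < c -> derivable_pt_lim F c (exp (- K * c) * (E' c - K * E c))).
  { intros c Hc. unfold F.
    replace (exp (- K * c) * (E' c - K * E c))
      with (- K * exp (- K * c) * E c + exp (- K * c) * E' c) by ring.
    apply (derivable_pt_lim_mult (fun s => exp (- K * s)) E); auto.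
    apply derivable_pt_lim_exp_lin. }
  assert (HFt : F t <= F 0).
  { apply (le_of_derivative_nonpos F (fun c => exp (- K * c) * (E' c - K * E c))); auto.
    - intros c Hc. destruct (Req_dec c 0) as [->|Hc0].
      + apply (continuity_pt_mult (fun s => exp (- K * s)) E); auto.
        apply derivable_continuous_pt. eexists. apply derivable_pt_lim_exp_lin.
      + apply derivable_continuous_pt. eexists. apply HFd. lra.
    - intros c Hc. apply HFd. lra.
    - intros c Hc. pose proof (exp_pos (- K * c)). pose proof (HEb c ltac:(lra)). nra. }
  unfold F in HFt. rewrite HE0, Rmult_0_r in HFt.
  pose proof (exp_pos (- K * t)). pose proof (HEpos t). nra.
Qed.

Lemma abs_entry_le_total (L : list (list nat)) A y z : In y L -> In z L ->
  Rabs (A y z) <= sum_list L (fun y => sum_list L (fun z => Rabs (A y z))).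
Proof.
  intros Hy Hz.
  apply Rle_trans with (sum_list L (fun z => Rabs (A y z))).
  - apply (sum_list_ge_term L (fun z => Rabs (A y z))); auto. intros; apply Rabs_pos.
  - apply (sum_list_ge_term L (fun y => sum_list L (fun z => Rabs (A y z)))); auto.
    intros; apply sum_list_nonneg; intros; apply Rabs_pos.
Qed.

Lemma quadratic_form_le (L : list (list nat)) (A : list nat -> list nat -> R) (v : list nat -> R) :
  sum_list L (fun z => 2 * v z * sum_list L (fun y => v y * A y z)) <=
  2 * INR (length L) * sum_list L (fun y => sum_list L (fun z => Rabs (A y z))) *
  sum_list L (fun z => v z * v z).
Proof.
  set (K0 := sum_list L (fun y => sum_list L (fun z => Rabs (A y z)))).
  set (S := sum_list L (fun z => v z * v z)).
  apply Rle_trans with (sum_list L (fun z => sum_list L (fun y => (v z * v z + v y * v y) * K0))).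
  - apply sum_list_le; intros z Hz. rewrite Rmult_assoc, <- !sum_list_scal.
    apply sum_list_le; intros y Hy.
    pose proof (abs_entry_le_total L A y z Hy Hz). fold K0 in H.
    assert (Habs : 2 * (v z * (v y * A y z)) <= 2 * Rabs (v z * v y) * Rabs (A y z)).
    { rewrite Rmult_assoc, <- Rabs_mult.
      replace (2 * (v z * (v y * A y z))) with (2 * ((v z * v y) * A y z)) by ring.
      apply Rmult_le_compat_l; [lra|]. apply Rle_abs. }
    assert (Hamgm : 2 * Rabs (v z * v y) <= v z * v z + v y * v y).
    { pose proof (Rle_0_sqr (v z - v y)); pose proof (Rle_0_sqr (v z + v y)); unfold Rsqr in *.
      unfold Rabs; destruct (Rcase_abs (v z * v y)); nra. }
    pose proof (Rabs_pos (A y z)). pose proof (Rabs_pos (v z * v y)). nra.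
  - right.
    rewrite (sum_list_ext L _ (fun z => (INR (length L) * K0) * (v z * v z) + K0 * S)).
    + rewrite sum_list_plus, sum_list_const, sum_list_scal. fold S. ring.
    + intros z Hz.
      rewrite (sum_list_ext L _ (fun y => K0 * (v z * v z) + K0 * (v y * v y))) by (intros; ring).
      rewrite sum_list_plus, sum_list_const, sum_list_scal. fold S. ring.
Qed.

(* Energy estimate: [E = sum_x d_x^2] satisfies [E' <= K E], so it stays [0]. *)
Lemma linear_ode_unique (L : list (list nat)) (A : list nat -> list nat -> R) (d : R -> list nat -> R) :
  (forall x c, In x L -> 0 < c ->
     derivable_pt_lim (fun s => d s x) c (sum_list L (fun y => d c y * A y x))) ->
  (forall x, In x L -> continuity_pt (fun s => d s x) 0) ->
  (forall x, In x L -> d 0 x = 0) ->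
  forall x t, In x L -> 0 <= t -> d t x = 0.
Proof.
  intros Hd Hc H0 x t Hx Ht.
  set (E := fun s => sum_list L (fun z => d s z * d s z)).
  set (E' := fun c => sum_list L (fun z => 2 * d c z * sum_list L (fun y => d c y * A y z))).
  assert (HEt : E t = 0).
  { apply (gronwall_zero E E'
      (2 * INR (length L) * sum_list L (fun y => sum_list L (fun z => Rabs (A y z))))); auto.
    - intros s. apply sum_list_nonneg. intros; apply Rle_0_sqr.
    - unfold E. rewrite (sum_list_ext L _ (fun _ => 0)) by (intros z Hz; rewrite H0; auto; ring).
      apply sum_list_zero.
    - apply sum_list_continuity_pt. intros z Hz.
      apply (continuity_pt_mult (fun s => d s z) (fun s => d s z)); auto.
    - intros c Hc0. apply sum_list_derivable_pt_lim. intros z Hz.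
      replace (2 * d c z * sum_list L (fun y => d c y * A y z))
        with (sum_list L (fun y => d c y * A y z) * d c z + d c z * sum_list L (fun y => d c y * A y z)) by ring.
      apply (derivable_pt_lim_mult (fun s => d s z) (fun s => d s z)); auto.
    - intros c _. apply quadratic_form_le. }
  assert (Hsq : d t x * d t x = 0).
  { apply (sum_list_zero_each L (fun z => d t z * d t z)); auto. intros; apply Rle_0_sqr. }
  nra.
Qed.

Lemma forward_equation_unique (L : list (list nat)) (A : list nat -> list nat -> R) (p q : R -> list nat -> R) :
  (forall x c, In x L -> 0 < c ->
     derivable_pt_lim (fun s => p s x) c (sum_list L (fun y => p c y * A y x))) ->
  (forall x c, In x L -> 0 < c ->
     derivable_pt_lim (fun s => q s x) c (sum_list L (fun y => q c y * A y x))) ->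
  (forall x, In x L -> continuity_pt (fun s => p s x) 0) ->
  (forall x, In x L -> continuity_pt (fun s => q s x) 0) ->
  (forall x, In x L -> p 0 x = q 0 x) ->
  forall x t, In x L -> 0 <= t -> p t x = q t x.
Proof.
  intros Hp Hq Hpc Hqc H0 x t Hx Ht.
  enough (p t x - q t x = 0) by lra.
  apply (linear_ode_unique L A (fun s y => p s y - q s y)); auto.
  - intros y c Hy Hc.
    replace (sum_list L (fun z => (p c z - q c z) * A z y))
      with (sum_list L (fun z => p c z * A z y) - sum_list L (fun z => q c z * A z y)).
    + apply (derivable_pt_lim_minus (fun s => p s y) (fun s => q s y)); auto.
    + rewrite (sum_list_ext L (fun z => (p c z - q c z) * A z y)
        (fun z => p c z * A z y + (-1) * (q c z * A z y))) by (intros; ring).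
      rewrite sum_list_plus, sum_list_scal. ring.
  - intros y Hy. apply (continuity_pt_minus (fun s => p s y) (fun s => q s y)); auto.
  - intros y Hy. rewrite H0; auto. ring.
Qed.

(** * The functions b_k *)

Definition conv (b : nat -> R -> R) (k : nat) (u : R) : R :=
  sumR (fun i => if Nat.leb 1 i then b i u * b (k - i)%nat u else 0) k.

Lemma conv_bound b k M u : 0 <= M ->
  (forall i, (1 <= i < k)%nat -> Rabs (b i u) <= M) ->
  Rabs (conv b k u) <= INR k * (M * M).
Proof.
  intros HM H. unfold conv. apply sumR_abs_bound. intros i Hi.
  destruct (Nat.leb 1 i) eqn:E.
  - apply Nat.leb_le in E. rewrite Rabs_mult.
    apply Rmult_le_compat; try apply Rabs_pos; apply H; lia.
  - rewrite Rabs_R0. nra.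
Qed.

Lemma conv_continuity_pt b k u :
  (forall i, (1 <= i < k)%nat -> continuity_pt (b i) u) ->
  continuity_pt (conv b k) u.
Proof.
  intros H. unfold conv.
  apply (sumR_continuity_pt (fun s i => if Nat.leb 1 i then b i s * b (k - i)%nat s else 0)).
  intros i Hi. destruct (Nat.leb 1 i) eqn:E.
  - apply Nat.leb_le in E. apply (continuity_pt_mult (b i) (b (k - i)%nat)); apply H; lia.
  - apply continuity_pt_const. intros ? ?; reflexivity.
Qed.

Lemma derivable_pt_lim_exp_integral (f g : R -> R) a c t : 0 < t ->
  (forall u, 0 < u -> continuity_pt g u) ->
  (forall z, 0 <= z -> exists pr : Riemann_integrable g 0 z, f z = c * exp (a * z) * RiemannInt pr) ->
  derivable_pt_lim f t (a * f t + c * exp (a * t) * g t).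
Proof.
  intros Ht Hg Hf.
  set (lo := t / 2). set (hi := t + 1).
  assert (Hlohi : lo <= hi) by (unfold lo, hi; lra).
  assert (Hglohi : forall x, lo <= x <= hi -> continuity_pt g x) by (intros x Hx; apply Hg; unfold lo in Hx; lra).
  destruct (Hf lo ltac:(unfold lo; lra)) as [prlo _].
  set (G := primitive Hlohi (FTC_P1 Hlohi Hglohi)).
  assert (Hloc : forall z, lo < z < hi -> f z = c * (exp (a * z) * (RiemannInt prlo + G z))).
  { intros z Hz. destruct (Hf z ltac:(unfold lo in Hz; lra)) as [prz ->].
    rewrite Rmult_assoc. do 2 f_equal. unfold G, primitive.
    destruct (Rle_dec lo z); [|lra]. destruct (Rle_dec z hi); [|lra].
    symmetry. apply RiemannInt_P26. }
  assert (Ht' : lo < t < hi) by (unfold lo, hi; lra).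
  apply (derivable_pt_lim_locally_ext (fun z => c * (exp (a * z) * (RiemannInt prlo + G z))) _ t lo hi);
    [auto | intros; rewrite Hloc; auto |].
  rewrite (Hloc t Ht').
  replace (a * (c * (exp (a * t) * (RiemannInt prlo + G t))) + c * exp (a * t) * g t)
    with (c * (a * exp (a * t) * (RiemannInt prlo + G t) + exp (a * t) * (0 + g t))) by ring.
  apply derivable_pt_lim_scal, (derivable_pt_lim_mult (fun z => exp (a * z)) (fun z => RiemannInt prlo + G z)).
  - apply derivable_pt_lim_exp_lin.
  - apply (derivable_pt_lim_plus (fun _ => RiemannInt prlo) G).
    + apply derivable_pt_lim_const.
    + apply RiemannInt_P27; auto.
Qed.

(* Strong induction on [k]: [b_integrand b k] only involves [b_i] for [i < k]. *)
Lemma b_derivable b : is_b b -> forall k, (1 <= k)%nat -> forall t, 0 < t ->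
  derivable_pt_lim (b k) t (INR k ^ 2 * b k t + INR k * conv b k t).
Proof.
  intros Hb k. induction k as [k IH] using (well_founded_induction lt_wf). intros Hk t Ht.
  destruct (Nat.eq_dec k 1) as [->|Hk1].
  - replace (INR 1 ^ 2 * b 1%nat t + INR 1 * conv b 1 t) with (exp t)
      by (rewrite (proj1 Hb t) by lra; unfold conv; simpl; ring).
    apply (derivable_pt_lim_locally_ext exp _ t 0 (t + 1)); [lra| |apply derivable_pt_lim_exp].
    intros z Hz. rewrite (proj1 Hb z); lra.
  - assert (Hg : forall u, 0 < u -> continuity_pt (b_integrand b k) u).
    { intros u Hu. apply (continuity_pt_mult (fun s => exp (- (INR k ^ 2) * s)) (conv b k)).
      - apply derivable_continuous_pt. eexists. apply derivable_pt_lim_exp_lin.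
      - apply conv_continuity_pt. intros i Hi. apply derivable_continuous_pt.
        eexists. apply IH; lia || auto. }
    replace (INR k ^ 2 * b k t + INR k * conv b k t)
      with (INR k ^ 2 * b k t + INR k * exp (INR k ^ 2 * t) * b_integrand b k t).
    + apply derivable_pt_lim_exp_integral; auto.
      intros z Hz. apply (proj2 Hb); auto; lia.
    + unfold b_integrand. fold (conv b k t).
      replace (INR k * exp (INR k ^ 2 * t) * (exp (- INR k ^ 2 * t) * conv b k t))
        with (INR k * conv b k t * exp (INR k ^ 2 * t + - INR k ^ 2 * t)) by (rewrite exp_plus; ring).
      replace (INR k ^ 2 * t + - INR k ^ 2 * t) with 0 by ring. rewrite exp_0. ring.
Qed.

Lemma b_0 b k : is_b b -> (2 <= k)%nat -> b k 0 = 0.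
Proof.
  intros [_ Hb] Hk. destruct (Hb k 0 Hk (Rle_refl 0)) as [pr Hpr]. rewrite Hpr, RiemannInt_P9. ring.
Qed.

Lemma b_linear_bound_step b k M : is_b b -> (2 <= k)%nat -> 0 <= M ->
  (forall i s, (1 <= i < k)%nat -> 0 <= s <= 1 -> Rabs (b i s) <= M) ->
  forall s, 0 <= s <= 1 -> Rabs (b k s) <= INR k * exp (INR k ^ 2) * (INR k * (M * M)) * s.
Proof.
  intros [_ Hb2] Hk HM H s Hs.
  destruct (Hb2 k s Hk (proj1 Hs)) as [pr Hpr]. rewrite Hpr.
  set (C := INR k * (M * M)).
  pose proof (pos_INR k). assert (Hk2 : 0 <= INR k ^ 2) by (apply pow_le; lra).
  assert (HI : -C * (s - 0) <= RiemannInt pr <= C * (s - 0)).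
  { apply RiemannInt_const_bound; [lra|]. intros x Hx.
    unfold b_integrand. fold (conv b k x).
    assert (Hconv : Rabs (conv b k x) <= C) by (apply conv_bound; auto; intros; apply H; auto; lra).
    assert (Hexp : 0 < exp (- (INR k ^ 2) * x) <= 1).
    { split; [apply exp_pos|]. rewrite <- exp_0. apply exp_le_compat. nra. }
    revert Hconv; unfold Rabs; destruct (Rcase_abs (conv b k x)); intros; nra. }
  assert (Habs : Rabs (RiemannInt pr) <= C * s) by (apply Rabs_le; lra).
  rewrite !Rabs_mult, (Rabs_right (exp _)), Rabs_right by (apply Rle_ge; auto; left; apply exp_pos).
  assert (exp (INR k ^ 2 * s) <= exp (INR k ^ 2)) by (apply exp_le_compat; nra).
  pose proof (exp_pos (INR k ^ 2 * s)). pose proof (Rabs_pos (RiemannInt pr)).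
  apply Rle_trans with (INR k * exp (INR k ^ 2) * Rabs (RiemannInt pr)).
  - apply Rmult_le_compat_r; auto. apply Rmult_le_compat_l; auto.
  - replace (INR k * exp (INR k ^ 2) * C * s) with (INR k * exp (INR k ^ 2) * (C * s)) by ring.
    apply Rmult_le_compat_l; [pose proof (exp_pos (INR k ^ 2)); nra | lra].
Qed.

Lemma b_bounded_01 b : is_b b -> forall k, exists M, 0 <= M /\
  forall i s, (1 <= i <= k)%nat -> 0 <= s <= 1 -> Rabs (b i s) <= M.
Proof.
  intros Hb k. induction k as [|[|k] [M [HM IH]]].
  - exists 0. split; [lra|]. intros; lia.
  - exists (exp 1). split; [left; apply exp_pos|]. intros i s Hi Hs.
    replace i with 1%nat by lia. rewrite (proj1 Hb), Rabs_right by (lra || left; apply exp_pos).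
    apply exp_le_compat; lra.
  - set (M2 := INR (S (S k)) * exp (INR (S (S k)) ^ 2) * (INR (S (S k)) * (M * M))).
    assert (HM2 : 0 <= M2).
    { pose proof (pos_INR (S (S k))). pose proof (exp_pos (INR (S (S k)) ^ 2)).
      unfold M2. apply Rmult_le_pos; [nra|]. apply Rmult_le_pos; nra. }
    exists (Rmax M M2). split; [apply Rle_trans with M; [auto | apply Rmax_l]|].
    intros i s Hi Hs. destruct (Nat.eq_dec i (S (S k))) as [->|Hik].
    + apply Rle_trans with (M2 * s); [|apply Rle_trans with M2; [nra | apply Rmax_r]].
      apply b_linear_bound_step; auto; [lia|]. intros; apply IH; auto; lia.
    + apply Rle_trans with M; [apply IH; auto; lia | apply Rmax_l].
Qed.

(* [b] is only constrained on [t >= 0]; clamping with [Rmax 0] yields a function determined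
   by those values, continuous at [0] because [b_k s = O(s)] for [k >= 2]. *)
Lemma b_clamp_continuity_pt0 b k : is_b b -> (1 <= k)%nat -> continuity_pt (fun s => b k (Rmax 0 s)) 0.
Proof.
  intros Hb Hk. destruct (Nat.eq_dec k 1) as [->|Hk1].
  - apply (continuity_pt_locally_ext (fun s => exp (Rmax 0 s)) _ 1); [lra| |].
    + intros y _. rewrite (proj1 Hb); auto. apply Rmax_l.
    + apply (continuity_pt_comp (fun s => Rmax 0 s) exp); [apply Rmax0_continuity_pt|].
      apply derivable_continuous_pt, derivable_pt_exp.
  - destruct (b_bounded_01 b Hb k) as [M [HM HbM]].
    set (L := INR k * exp (INR k ^ 2) * (INR k * (M * M))).
    assert (HL : 0 <= L).
    { pose proof (pos_INR k). pose proof (exp_pos (INR k ^ 2)).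
      unfold L. apply Rmult_le_pos; [nra|]. apply Rmult_le_pos; nra. }
    apply (lipschitz_continuity_pt _ 0 L HL). intros s Hs.
    rewrite Rminus_0_r in *. rewrite (Rmax_left 0 0) by lra. rewrite (b_0 b k Hb) by lia. rewrite Rminus_0_r.
    assert (Hm : 0 <= Rmax 0 s <= 1 /\ Rmax 0 s <= Rabs s).
    { unfold Rmax; destruct (Rle_dec 0 s);
      apply Rabs_def2 in Hs; rewrite ?Rabs_right, ?Rabs_left1 by lra; lra. }
    apply Rle_trans with (L * Rmax 0 s); [|apply Rmult_le_compat_l; lra].
    apply b_linear_bound_step; auto; try lia; [|tauto].
    intros; apply HbM; auto; lia.
Qed.

(** * States and merges *)

Lemma length_modify f k l : length (modify f k l) = length l.
Proof. revert k; induction l; intros [|k]; simpl; auto. Qed.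

Lemma nth_modify f k l m : (k < length l)%nat ->
  nth m (modify f k l) 0%nat = if Nat.eq_dec m k then f (nth m l 0%nat) else nth m l 0%nat.
Proof.
  revert k m; induction l as [|a l IH]; intros k m Hk; simpl in Hk; [lia|].
  destruct k as [|k], m as [|m]; simpl; auto.
  - rewrite IH by lia. destruct (Nat.eq_dec m k), (Nat.eq_dec (S m) (S k)); auto; lia.
Qed.

Lemma nk_nth l k0 : nk l (S k0) = nth k0 l 0%nat.
Proof. unfold nk. f_equal. lia. Qed.

Definition unmerge (eta : list nat) (i j : nat) : list nat :=
  modify S (i - 1) (modify S (j - 1) (modify pred (i + j - 1) eta)).

Lemma length_merge l i j : length (merge l i j) = length l.
Proof. unfold merge. rewrite !length_modify. auto. Qed.

Lemma length_unmerge l i j : length (unmerge l i j) = length l.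
Proof. unfold unmerge. rewrite !length_modify. auto. Qed.

Lemma nth_merge l i j p : (1 <= i)%nat -> (1 <= j)%nat -> (i + j <= length l)%nat ->
  nth p (merge l i j) 0%nat =
  (if Nat.eq_dec p (i + j - 1) then S else fun x => x)
   ((if Nat.eq_dec p (j - 1) then pred else fun x => x)
    ((if Nat.eq_dec p (i - 1) then pred else fun x => x) (nth p l 0%nat))).
Proof.
  intros Hi Hj Hl. unfold merge.
  rewrite nth_modify by (rewrite !length_modify; lia).
  rewrite nth_modify by (rewrite !length_modify; lia).
  rewrite nth_modify by lia.
  destruct (Nat.eq_dec p (i + j - 1)), (Nat.eq_dec p (j - 1)), (Nat.eq_dec p (i - 1)); reflexivity.
Qed.

Lemma nth_unmerge l i j p : (1 <= i)%nat -> (1 <= j)%nat -> (i + j <= length l)%nat ->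
  nth p (unmerge l i j) 0%nat =
  (if Nat.eq_dec p (i - 1) then S else fun x => x)
   ((if Nat.eq_dec p (j - 1) then S else fun x => x)
    ((if Nat.eq_dec p (i + j - 1) then pred else fun x => x) (nth p l 0%nat))).
Proof.
  intros Hi Hj Hl. unfold unmerge.
  rewrite nth_modify by (rewrite !length_modify; lia).
  rewrite nth_modify by (rewrite !length_modify; lia).
  rewrite nth_modify by lia.
  destruct (Nat.eq_dec p (i + j - 1)), (Nat.eq_dec p (j - 1)), (Nat.eq_dec p (i - 1)); reflexivity.
Qed.

Section NkUnmerge.
Variables (eta : list nat) (i j : nat).
Hypotheses (Hi : (1 <= i)%nat) (Hj : (1 <= j)%nat) (Hlen : (i + j <= length eta)%nat).

Lemma nk_unmerge_sum : nk (unmerge eta i j) (i + j) = pred (nk eta (i + j)).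
Proof.
  unfold nk. rewrite nth_unmerge by auto.
  destruct (Nat.eq_dec _ (i - 1)), (Nat.eq_dec _ (j - 1)), (Nat.eq_dec _ (i + j - 1)); lia.
Qed.

Lemma nk_unmerge_other k : (1 <= k)%nat -> k <> i -> k <> j -> k <> (i + j)%nat ->
  nk (unmerge eta i j) k = nk eta k.
Proof.
  intros Hk Hki Hkj Hkm. unfold nk. rewrite nth_unmerge by auto.
  destruct (Nat.eq_dec _ (i - 1)), (Nat.eq_dec _ (j - 1)), (Nat.eq_dec _ (i + j - 1)); lia.
Qed.

Lemma nk_unmerge_l : i <> j -> nk (unmerge eta i j) i = S (nk eta i).
Proof.
  intros Hij. unfold nk. rewrite nth_unmerge by auto.
  destruct (Nat.eq_dec _ (i - 1)), (Nat.eq_dec _ (j - 1)), (Nat.eq_dec _ (i + j - 1)); lia.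
Qed.

Lemma nk_unmerge_r : i <> j -> nk (unmerge eta i j) j = S (nk eta j).
Proof.
  intros Hij. unfold nk. rewrite nth_unmerge by auto.
  destruct (Nat.eq_dec _ (i - 1)), (Nat.eq_dec _ (j - 1)), (Nat.eq_dec _ (i + j - 1)); lia.
Qed.

Lemma nk_unmerge_diag : i = j -> nk (unmerge eta i j) i = S (S (nk eta i)).
Proof.
  intros <-. unfold nk. rewrite nth_unmerge by auto.
  destruct (Nat.eq_dec _ (i - 1)), (Nat.eq_dec _ (i + i - 1)); lia.
Qed.

End NkUnmerge.

Lemma merge_unmerge l i j : (1 <= i)%nat -> (1 <= j)%nat -> (i + j <= length l)%nat ->
  (1 <= nth (i + j - 1) l 0)%nat -> merge (unmerge l i j) i j = l.
Proof.
  intros Hi Hj Hl Hm. apply nth_ext with 0%nat 0%nat; [rewrite length_merge, length_unmerge; auto|].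
  intros p Hp. rewrite nth_merge by (rewrite ?length_unmerge; lia).
  rewrite nth_unmerge by lia.
  destruct (Nat.eq_dec p (i + j - 1)), (Nat.eq_dec p (j - 1)), (Nat.eq_dec p (i - 1)); try lia;
  subst; simpl; lia.
Qed.

Lemma rate_mult_neq0 xi i j : rate psi_mult xi i j <> 0 ->
  if Nat.eq_dec i j then (2 <= nk xi i)%nat else (1 <= nk xi i /\ 1 <= nk xi j)%nat.
Proof.
  unfold rate. destruct (Nat.eq_dec i j) as [e|e]; intros H.
  - destruct (nk xi i) as [|[|n]]; [simpl in H; lra| simpl in H; lra| lia].
  - destruct (nk xi i) as [|n1]; [simpl in H; lra|].
    destruct (nk xi j) as [|n2]; [simpl in H; lra|]. lia.
Qed.

Lemma unmerge_merge xi i j : (1 <= i)%nat -> (1 <= j)%nat -> (i + j <= length xi)%nat ->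
  rate psi_mult xi i j <> 0 -> unmerge (merge xi i j) i j = xi.
Proof.
  intros Hi Hj Hl Hr. apply rate_mult_neq0 in Hr. unfold nk in Hr.
  apply nth_ext with 0%nat 0%nat; [rewrite length_unmerge, length_merge; auto|].
  intros p Hp. rewrite nth_unmerge by (rewrite ?length_merge; lia).
  rewrite nth_merge by lia.
  destruct (Nat.eq_dec i j) as [e|e].
  - subst j. destruct (Nat.eq_dec p (i + i - 1)), (Nat.eq_dec p (i - 1)); try lia; subst; simpl; lia.
  - destruct (Nat.eq_dec p (i + j - 1)), (Nat.eq_dec p (j - 1)), (Nat.eq_dec p (i - 1)); try lia;
    subst; simpl; lia.
Qed.

Lemma nth_merge_pos xi i j : (1 <= i)%nat -> (1 <= j)%nat -> (i + j <= length xi)%nat ->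
  (1 <= nth (i + j - 1) (merge xi i j) 0)%nat.
Proof.
  intros Hi Hj Hl. rewrite nth_merge by lia.
  destruct (Nat.eq_dec (i + j - 1) (i + j - 1)); [lia|congruence].
Qed.

Lemma fold_right_add_acc (l : list nat) a : fold_right Nat.add a l = (a + fold_right Nat.add 0 l)%nat.
Proof. induction l; simpl; lia. Qed.

Lemma weight_sumR_seq (l : list nat) n :
  INR (fold_right Nat.add 0%nat (map (fun k => k * nk l k)%nat (seq 1 n))) =
  sumR (fun p => INR (S p) * INR (nth p l 0%nat)) n.
Proof.
  induction n; [simpl; auto|].
  rewrite seq_S, map_app, fold_right_app.
  change (fold_right Nat.add 0%nat (map (fun k => (k * nk l k)%nat) [(1 + n)%nat])) with
    ((1 + n) * nk l (1 + n) + 0)%nat.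
  rewrite fold_right_add_acc, plus_INR, IHn, sumR_S.
  rewrite Nat.add_0_r, mult_INR. replace (1 + n)%nat with (S n) by lia. rewrite nk_nth. lra.
Qed.

Lemma weight_sumR l : INR (weight l) = sumR (fun p => INR (S p) * INR (nth p l 0%nat)) (length l).
Proof. apply weight_sumR_seq. Qed.

Lemma in_all_lists n m l : In l (all_lists n m) <-> length l = n /\ Forall (fun x => (x <= m)%nat) l.
Proof.
  revert l; induction n; intros l.
  - simpl. split.
    + intros [<-|[]]; auto.
    + intros [H _]; destruct l; [auto|simpl in H; lia].
  - change (all_lists (S n) m) with (flat_map (fun x => map (cons x) (all_lists n m)) (seq 0 (S m))).
    rewrite in_flat_map. split.
    + intros [x [Hx Hl]]. apply in_map_iff in Hl. destruct Hl as [l' [<- Hl']].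
      apply IHn in Hl'. destruct Hl'. apply in_seq in Hx. simpl. split; [lia|]. constructor; [lia|auto].
    + intros [Hl Hf]. destruct l as [|x l']; [simpl in Hl; lia|].
      inversion Hf; subst. exists x. split; [apply in_seq; lia|].
      apply in_map. apply IHn. simpl in Hl. split; auto.
Qed.

Lemma NoDup_all_lists n m : NoDup (all_lists n m).
Proof.
  induction n; [simpl; constructor; [simpl; auto|constructor]|].
  change (all_lists (S n) m) with (flat_map (fun x => map (cons x) (all_lists n m)) (seq 0 (S m))).
  assert (Hs : NoDup (seq 0 (S m))) by apply seq_NoDup.
  generalize dependent (seq 0 (S m)). intros s Hs. induction s as [|a s IHs]; simpl; [constructor|].
  inversion Hs; subst. apply NoDup_app.
  - apply NoDup_map_NoDup_ForallPairs; auto. intros x y _ _ H; injection H; auto.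
  - apply IHs; auto.
  - intros x Hx Hx'. apply in_map_iff in Hx. destruct Hx as [l1 [<- _]].
    apply in_flat_map in Hx'. destruct Hx' as [y [Hy Hy']]. apply in_map_iff in Hy'.
    destruct Hy' as [l2 [E _]]. injection E; intros; subst; auto.
Qed.

Lemma NoDup_Omega N : NoDup (Omega N).
Proof. apply NoDup_filter, NoDup_all_lists. Qed.

Lemma in_Omega_iff N eta : In eta (Omega N) <-> in_Omega N eta.
Proof.
  unfold Omega, in_Omega. rewrite filter_In, in_all_lists, Nat.eqb_eq. split.
  - intros [[H1 _] H2]; auto.
  - intros [H1 H2]. split; [split; auto|auto].
    apply Forall_forall. intros x Hx. apply In_nth with (d := 0%nat) in Hx. destruct Hx as [p [Hp <-]].
    pose proof (weight_sumR eta) as W. rewrite H2 in W.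
    pose proof (sumR_ge_one (fun p => INR (S p) * INR (nth p eta 0%nat)) (length eta) p
       ltac:(intros; apply Rmult_le_pos; apply pos_INR) Hp) as G. cbv beta in G.
    rewrite <- W in G. apply INR_le. rewrite S_INR in G. pose proof (pos_INR p).
    pose proof (pos_INR (nth p eta 0%nat)). nra.
Qed.

Lemma unmerge_in_Omega N eta i j : In eta (Omega N) -> (1 <= i)%nat -> (1 <= j)%nat -> (i + j <= N)%nat ->
  (1 <= nth (i + j - 1) eta 0)%nat -> In (unmerge eta i j) (Omega N).
Proof.
  intros H Hi Hj HN Hm. apply in_Omega_iff in H. destruct H as [H1 H2].
  apply in_Omega_iff. split; [rewrite length_unmerge; auto|].
  apply INR_eq. transitivity (INR (weight eta)); [|rewrite H2; auto].
  rewrite !weight_sumR, length_unmerge, H1.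
  rewrite (sumR_ext _ (fun p => ((INR (S p) * INR (nth p eta 0%nat) +
     (if Nat.eq_dec p (i - 1) then INR (S p) else 0)) + (if Nat.eq_dec p (j - 1) then INR (S p) else 0))
      + (-1) * (if Nat.eq_dec p (i + j - 1) then INR (S p) else 0))).
  - rewrite !sumR_plus, sumR_scal.
    rewrite (sumR_single (fun p => INR (S p))) by lia.
    rewrite (sumR_single (fun p => INR (S p))) by lia.
    rewrite (sumR_single (fun p => INR (S p))) by lia.
    replace (S (i - 1)) with i by lia. replace (S (j - 1)) with j by lia.
    replace (S (i + j - 1)) with (i + j)%nat by lia. rewrite plus_INR. lra.
  - intros p Hp. rewrite nth_unmerge by lia.
    destruct (Nat.eq_dec p (i + j - 1)), (Nat.eq_dec p (j - 1)), (Nat.eq_dec p (i - 1)); try lia;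
    subst; rewrite ?S_INR, ?mult_INR; simpl;
    try (rewrite ?S_INR, ?(Nat.succ_pred_pos _ Hm); ring);
    try (rewrite <- (Nat.succ_pred_pos (nth _ eta 0%nat)) at 2 by lia; rewrite S_INR; ring);
    try ring.
Qed.

Lemma weight_sum N eta : In eta (Omega N) ->
  sumR (fun i => INR i * INR (nk eta i)) (S N) = INR N.
Proof.
  intros H. apply in_Omega_iff in H. destruct H as [H1 H2].
  rewrite sumR_shift. simpl (INR 0). rewrite Rmult_0_l, Rplus_0_l.
  rewrite <- H2 at 2. rewrite weight_sumR, H1. apply sumR_ext. intros; rewrite nk_nth; auto.
Qed.

Lemma weight_term_le N eta i : In eta (Omega N) -> (1 <= i <= N)%nat -> INR i * INR (nk eta i) <= INR N.
Proof.
  intros H Hi. apply in_Omega_iff in H. destruct H as [H1 H2].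
  rewrite <- H2, weight_sumR, H1.
  pose proof (sumR_ge_one (fun p => INR (S p) * INR (nth p eta 0%nat)) N (i - 1)
      ltac:(intros; apply Rmult_le_pos; apply pos_INR) ltac:(lia)) as G. cbv beta in G.
  replace (S (i - 1)) with i in G by lia. unfold nk. auto.
Qed.

Lemma weight_two_terms_le N eta i j : In eta (Omega N) -> (1 <= i <= N)%nat -> (1 <= j <= N)%nat -> i <> j ->
  INR i * INR (nk eta i) + INR j * INR (nk eta j) <= INR N.
Proof.
  intros H Hi Hj Hij. apply in_Omega_iff in H. destruct H as [H1 H2].
  rewrite <- H2, weight_sumR, H1.
  pose proof (sumR_ge_two (fun p => INR (S p) * INR (nth p eta 0%nat)) N (i - 1) (j - 1)
      ltac:(intros; apply Rmult_le_pos; apply pos_INR) ltac:(lia) ltac:(lia) ltac:(lia)) as G. cbv beta in G.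
  replace (S (i - 1)) with i in G by lia. replace (S (j - 1)) with j in G by lia. unfold nk. auto.
Qed.

Lemma nth_init N p : (1 <= p)%nat -> nth p (init_state N) 0%nat = 0%nat.
Proof.
  intros Hp. unfold init_state. destruct p as [|p]; [lia|]. simpl. apply nth_repeat.
Qed.

Lemma length_init N : (1 <= N)%nat -> length (init_state N) = N.
Proof. intros. unfold init_state. simpl. rewrite repeat_length. lia. Qed.

Lemma pair_ok_iff N i j : pair_ok N i j = true <-> (1 <= i /\ i <= j /\ i + j <= N)%nat.
Proof.
  unfold pair_ok. rewrite !andb_true_iff, !Nat.leb_le. tauto.
Qed.

(* Pairs with [i + j > N] contribute nothing on either side: such clusters cannot coexist. *)
Lemma rate_mult_pair_term N eta i j : In eta (Omega N) -> (i <= N)%nat -> (j <= N)%nat ->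
  (if Nat.leb i j then pair_mult i j * (INR i * INR (nk eta i) * (INR j * INR (nk eta j))) else 0) =
  (if pair_ok N i j then rate psi_mult eta i j else 0) +
  (if Nat.eq_dec j i then INR i ^ 2 * INR (nk eta i) else 0).
Proof.
  intros HO Hi Hj. unfold pair_ok, pair_mult, rate, psi_mult.
  destruct (Nat.leb i j) eqn:E1; [apply Nat.leb_le in E1|apply Nat.leb_gt in E1].
  2:{ destruct (Nat.eq_dec j i); [lia|]. rewrite andb_false_r. simpl. ring. }
  destruct (Nat.leb 1 i) eqn:E2; [apply Nat.leb_le in E2|].
  2:{ apply Nat.leb_gt in E2. replace i with 0%nat by lia. simpl. destruct (Nat.eq_dec j 0); ring. }
  destruct (Nat.eq_dec i j) as [<-|e].
  - destruct (Nat.eq_dec i i); [|lia]. simpl andb.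
    destruct (Nat.leb (i + i) N) eqn:E3; [field|apply Nat.leb_gt in E3].
    pose proof (weight_term_le N eta i HO ltac:(lia)) as W1.
    destruct (nk eta i) as [|[|n]]; [simpl; ring|simpl; ring|].
    exfalso. rewrite !S_INR in W1. pose proof (pos_INR n).
    assert (W2 : INR N < INR (i + i)) by (apply lt_INR; lia). rewrite plus_INR in W2.
    assert (1 <= INR i) by (apply (le_INR 1); lia). nra.
  - destruct (Nat.eq_dec j i); [lia|].
    replace (Nat.leb i j) with true by (symmetry; apply Nat.leb_le; lia). simpl andb.
    destruct (Nat.leb (i + j) N) eqn:E3; [ring|apply Nat.leb_gt in E3].
    pose proof (weight_two_terms_le N eta i j HO ltac:(lia) ltac:(lia) e) as W1.
    assert (W2 : INR N < INR (i + j)) by (apply lt_INR; lia). rewrite plus_INR in W2.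
    destruct (nk eta i) as [|ni]; [simpl; ring|]. destruct (nk eta j) as [|nj]; [simpl; ring|].
    exfalso. rewrite !S_INR in W1. pose proof (pos_INR ni). pose proof (pos_INR nj).
    pose proof (pos_INR i). pose proof (pos_INR j). nra.
Qed.

(* Expand [N^2 = (sum_k k n_k)^2] and split off the diagonal [sum_k k^2 n_k]. *)
Lemma total_rate_mult N eta : In eta (Omega N) ->
  sum_pairs N (fun i j => rate psi_mult eta i j) = INR N ^ 2 - sumR (fun i => INR i ^ 2 * INR (nk eta i)) (S N).
Proof.
  intros HO.
  set (w := fun i => INR i * INR (nk eta i)).
  assert (Hsq : sumR (fun i => sumR (fun j => w i * w j) (S N)) (S N) = INR N ^ 2).
  { rewrite (sumR_ext _ (fun i => w i * sumR w (S N))) by (intros; apply sumR_scal).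
    rewrite sumR_scal_r. unfold w. rewrite weight_sum; auto. ring. }
  rewrite sumR_sym in Hsq by (intros; ring).
  rewrite (sumR_ext _ (fun i => sumR (fun j => if pair_ok N i j then rate psi_mult eta i j else 0) (S N)
        + INR i ^ 2 * INR (nk eta i))) in Hsq.
  - rewrite sumR_plus in Hsq. unfold sum_pairs. lra.
  - intros i Hi. rewrite (sumR_ext _ (fun j => (if pair_ok N i j then rate psi_mult eta i j else 0)
        + (if Nat.eq_dec j i then INR i ^ 2 * INR (nk eta i) else 0)))
      by (intros j Hj; apply rate_mult_pair_term; auto; lia).
    rewrite sumR_plus, (sumR_single (fun _ => INR i ^ 2 * INR (nk eta i))) by lia. reflexivity.
Qed.

(** * The product formula solves the forward equation *)

Definition bterm (b : nat -> R -> R) (t : R) (k n : nat) : R :=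
  b k t ^ n / (INR k ^ n * INR (fact n)).

Lemma bterm_S b t k n : (1 <= k)%nat ->
  bterm b t k (S n) * (INR (S n) * INR k) = bterm b t k n * b k t.
Proof.
  intros Hk. unfold bterm. rewrite fact_simpl, mult_INR. simpl pow.
  assert (INR k <> 0) by (apply not_0_INR; lia).
  assert (INR k ^ n <> 0) by (apply pow_nonzero; auto).
  pose proof (INR_fact_neq_0 n). assert (INR (S n) <> 0) by (apply not_0_INR; lia).
  field. auto.
Qed.

Lemma bterm_pred b t m z : (1 <= m)%nat ->
  INR (S z) * b m t ^ z * INR m / (INR m ^ S z * INR (fact (S z))) = bterm b t m z.
Proof.
  intros Hm. unfold bterm. rewrite fact_simpl, mult_INR. simpl pow.
  assert (INR m <> 0) by (apply not_0_INR; lia).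
  assert (INR m ^ z <> 0) by (apply pow_nonzero; auto).
  pose proof (INR_fact_neq_0 z). assert (INR (S z) <> 0) by (apply not_0_INR; lia).
  field. auto.
Qed.

Definition qfactor (b : nat -> R -> R) (t : R) (eta : list nat) (k0 : nat) : R :=
  bterm b t (S k0) (nk eta (S k0)).

Definition qlaw (b : nat -> R -> R) (N : nat) (t : R) (eta : list nat) : R :=
  INR (fact N) * exp (- (INR N ^ 2) * t) * prodR (qfactor b t eta) N.

(* The [k b_i b_j] part of [b_k'] ([k = i + j]) propagated through [d/dt (bterm b t k n_k)]. *)
Definition inflow_factor (b : nat -> R -> R) (t : R) (eta : list nat) (i j : nat) : R :=
  INR (nk eta (i + j)) * b (i + j)%nat t ^ pred (nk eta (i + j)) * (INR (i + j) * (b i t * b j t)) /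
  (INR (i + j) ^ nk eta (i + j) * INR (fact (nk eta (i + j)))).

Definition inflow_term (b : nat -> R -> R) (N : nat) (t : R) (eta : list nat) (i j : nat) : R :=
  if (Nat.leb 1 i && Nat.leb 1 j && Nat.leb (i + j) N)%bool
  then prodR (fun k0 => if Nat.eq_dec k0 (i + j - 1) then inflow_factor b t eta i j else qfactor b t eta k0) N
  else 0.

Lemma qfactor_nth b t s p : qfactor b t s p = bterm b t (S p) (nth p s 0%nat).
Proof. unfold qfactor. rewrite nk_nth. auto. Qed.

Lemma qfactor_pred b t l k : (1 <= k)%nat -> qfactor b t l (k - 1) = bterm b t k (nk l k).
Proof. intros Hk. unfold qfactor. replace (S (k - 1)) with k by lia. reflexivity. Qed.

Lemma prodR_qfactor_unmerge_offdiag b t eta i j N : (1 <= i)%nat -> (1 <= j)%nat -> i <> j ->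
  (i + j <= N)%nat -> length eta = N ->
  prodR (qfactor b t (unmerge eta i j)) N *
    (INR (S (nk eta i)) * INR i * (INR (S (nk eta j)) * INR j)) =
  b i t * b j t * bterm b t (i + j) (pred (nk eta (i + j))) * prodR_off [(i + j - 1)%nat] (qfactor b t eta) N.
Proof.
  intros Hi Hj Hij HN HL.
  set (s := unmerge eta i j).
  rewrite <- prodR_off_nil, (prodR_off_cons (i + j - 1)%nat) by (lia || intros []).
  rewrite (prodR_off_cons (i - 1)%nat [(i + j - 1)%nat] (qfactor b t s)) by (simpl; lia).
  rewrite (prodR_off_cons (j - 1)%nat [(i - 1)%nat; (i + j - 1)%nat] (qfactor b t s)) by (simpl; lia).
  rewrite (prodR_off_cons (i - 1)%nat [(i + j - 1)%nat] (qfactor b t eta)) by (simpl; lia).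
  rewrite (prodR_off_cons (j - 1)%nat [(i - 1)%nat; (i + j - 1)%nat] (qfactor b t eta)) by (simpl; lia).
  rewrite (prodR_off_ext _ (qfactor b t s) (qfactor b t eta)).
  2:{ intros k Hk Hn. simpl in Hn. unfold qfactor, s. rewrite nk_unmerge_other; [reflexivity | lia ..]. }
  rewrite !qfactor_pred by lia. unfold s.
  rewrite nk_unmerge_sum, nk_unmerge_l, nk_unmerge_r by lia.
  set (rest := prodR_off _ (qfactor b t eta) N).
  transitivity (bterm b t (i + j) (pred (nk eta (i + j))) * rest *
    (bterm b t i (S (nk eta i)) * (INR (S (nk eta i)) * INR i)) *
    (bterm b t j (S (nk eta j)) * (INR (S (nk eta j)) * INR j))); [ring|].
  rewrite !bterm_S by lia. ring.
Qed.

Lemma prodR_qfactor_unmerge_diag b t eta i N : (1 <= i)%nat -> (i + i <= N)%nat -> length eta = N ->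
  prodR (qfactor b t (unmerge eta i i)) N *
    (INR (S (S (nk eta i))) * INR i * (INR (S (nk eta i)) * INR i)) =
  b i t * b i t * bterm b t (i + i) (pred (nk eta (i + i))) * prodR_off [(i + i - 1)%nat] (qfactor b t eta) N.
Proof.
  intros Hi HN HL.
  set (s := unmerge eta i i).
  rewrite <- prodR_off_nil, (prodR_off_cons (i + i - 1)%nat) by (lia || intros []).
  rewrite (prodR_off_cons (i - 1)%nat [(i + i - 1)%nat] (qfactor b t s)) by (simpl; lia).
  rewrite (prodR_off_cons (i - 1)%nat [(i + i - 1)%nat] (qfactor b t eta)) by (simpl; lia).
  rewrite (prodR_off_ext _ (qfactor b t s) (qfactor b t eta)).
  2:{ intros k Hk Hn. simpl in Hn. unfold qfactor, s. rewrite nk_unmerge_other; [reflexivity | lia ..]. }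
  rewrite !qfactor_pred by lia. unfold s.
  rewrite nk_unmerge_sum, nk_unmerge_diag by lia.
  set (rest := prodR_off _ (qfactor b t eta) N).
  transitivity (bterm b t (i + i) (pred (nk eta (i + i))) * rest *
    (bterm b t i (S (S (nk eta i))) * (INR (S (S (nk eta i))) * INR i)) * (INR (S (nk eta i)) * INR i)); [ring|].
  rewrite bterm_S by lia.
  transitivity (bterm b t (i + i) (pred (nk eta (i + i))) * rest * b i t *
    (bterm b t i (S (nk eta i)) * (INR (S (nk eta i)) * INR i))); [ring|].
  rewrite bterm_S by lia. ring.
Qed.

Lemma inflow_unmerge b N t eta i j : In eta (Omega N) -> pair_ok N i j = true ->
  (1 <= nk eta (i + j))%nat ->
  qlaw b N t (unmerge eta i j) * rate psi_mult (unmerge eta i j) i j =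
  pair_mult i j * (INR (fact N) * exp (- (INR N ^ 2) * t) * inflow_term b N t eta i j).
Proof.
  intros HO Hp Hz. apply pair_ok_iff in Hp. destruct Hp as [Hi [Hij HN]].
  assert (HL : length eta = N) by (apply in_Omega_iff in HO; apply HO).
  unfold inflow_term. replace (Nat.leb 1 i && Nat.leb 1 j && Nat.leb (i + j) N)%bool with true
    by (symmetry; rewrite !andb_true_iff, !Nat.leb_le; lia).
  rewrite prodR_update by lia. unfold qlaw.
  replace (inflow_factor b t eta i j) with (bterm b t (i + j) (pred (nk eta (i + j))) * (b i t * b j t)).
  2:{ unfold inflow_factor. destruct (nk eta (i + j)) as [|z]; [lia|].
      simpl Nat.pred. rewrite <- (bterm_pred b t (i + j) z) by lia. unfold Rdiv. ring. }
  unfold rate, pair_mult, psi_mult. destruct (Nat.eq_dec i j) as [<-|Hne].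
  - rewrite nk_unmerge_diag by lia.
    replace (INR (S (S (nk eta i))) * (INR (S (S (nk eta i))) - 1) / 2 * (2 * INR i * INR i))
      with (INR (S (S (nk eta i))) * INR i * (INR (S (nk eta i)) * INR i))
      by (rewrite (S_INR (S (nk eta i))); field).
    transitivity (INR (fact N) * exp (- (INR N ^ 2) * t) *
      (prodR (qfactor b t (unmerge eta i i)) N * (INR (S (S (nk eta i))) * INR i * (INR (S (nk eta i)) * INR i))));
      [ring|].
    rewrite prodR_qfactor_unmerge_diag by lia. ring.
  - rewrite nk_unmerge_l, nk_unmerge_r by lia.
    replace (INR (S (nk eta i)) * INR (S (nk eta j)) * (2 * INR i * INR j))
      with (2 * (INR (S (nk eta i)) * INR i * (INR (S (nk eta j)) * INR j))) by ring.
    transitivity (2 * (INR (fact N) * exp (- (INR N ^ 2) * t)) *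
      (prodR (qfactor b t (unmerge eta i j)) N * (INR (S (nk eta i)) * INR i * (INR (S (nk eta j)) * INR j))));
      [ring|].
    rewrite prodR_qfactor_unmerge_offdiag by lia. ring.
Qed.

Lemma inflow_mult b N t eta i j : In eta (Omega N) -> pair_ok N i j = true ->
  sum_list (Omega N) (fun xi => qlaw b N t xi * (rate psi_mult xi i j * ind_eq (merge xi i j) eta)) =
  pair_mult i j * (INR (fact N) * exp (- (INR N ^ 2) * t) * inflow_term b N t eta i j).
Proof.
  intros HO Hp. pose proof Hp as Hp'. apply pair_ok_iff in Hp'. destruct Hp' as [Hi [Hij HN]].
  assert (HL : length eta = N) by (apply in_Omega_iff in HO; apply HO).
  destruct (Nat.eq_dec (nk eta (i + j)) 0) as [Hz|Hz].
  - rewrite (sum_list_ext _ _ (fun _ => 0)).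
    + rewrite sum_list_zero. unfold inflow_term.
      replace (Nat.leb 1 i && Nat.leb 1 j && Nat.leb (i + j) N)%bool with true
        by (symmetry; rewrite !andb_true_iff, !Nat.leb_le; lia).
      rewrite prodR_update by lia. unfold inflow_factor. rewrite Hz. simpl INR. unfold Rdiv. ring.
    + intros xi Hxi. assert (HLx : length xi = N) by (apply in_Omega_iff in Hxi; apply Hxi).
      destruct (Req_dec (rate psi_mult xi i j) 0) as [Hr|Hr]; [rewrite Hr; ring|].
      unfold ind_eq. destruct (list_eq_dec Nat.eq_dec (merge xi i j) eta) as [E|E]; [|ring].
      exfalso. pose proof (nth_merge_pos xi i j ltac:(lia) ltac:(lia) ltac:(lia)). rewrite E in H.
      unfold nk in Hz. lia.
  - set (s := unmerge eta i j).
    assert (HsO : In s (Omega N)) by (apply unmerge_in_Omega; auto; try lia; unfold nk in Hz; lia).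
    rewrite (sum_list_ext _ _ (fun xi => ind_eq xi s * (qlaw b N t s * rate psi_mult s i j))).
    + rewrite sum_list_ind_eq; auto using NoDup_Omega. apply inflow_unmerge; auto. lia.
    + intros xi Hxi. assert (HLx : length xi = N) by (apply in_Omega_iff in Hxi; apply Hxi).
      unfold ind_eq at 2. destruct (list_eq_dec Nat.eq_dec xi s) as [E|E].
      * subst xi. unfold ind_eq, s. rewrite merge_unmerge by (unfold nk in Hz; lia).
        destruct (list_eq_dec Nat.eq_dec eta eta); [ring|congruence].
      * destruct (Req_dec (rate psi_mult xi i j) 0) as [Hr|Hr]; [rewrite Hr; ring|].
        unfold ind_eq. destruct (list_eq_dec Nat.eq_dec (merge xi i j) eta) as [E2|E2]; [|ring].
        exfalso. apply E. unfold s. rewrite <- E2. symmetry. apply unmerge_merge; auto; lia.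
Qed.

Lemma inflow_term_sym b N t eta i j : inflow_term b N t eta i j = inflow_term b N t eta j i.
Proof.
  unfold inflow_term. rewrite (Nat.add_comm j i).
  replace (Nat.leb 1 j && Nat.leb 1 i)%bool with (Nat.leb 1 i && Nat.leb 1 j)%bool by apply andb_comm.
  destruct (Nat.leb 1 i && Nat.leb 1 j && Nat.leb (i + j) N)%bool; [|auto].
  apply prodR_ext. intros k _. destruct (Nat.eq_dec k (i + j - 1)); auto.
  unfold inflow_factor. rewrite (Nat.add_comm j i). unfold Rdiv; ring.
Qed.

Definition qfactor_deriv (b : nat -> R -> R) (t : R) (eta : list nat) (k0 : nat) : R :=
  INR (nk eta (S k0)) * b (S k0) t ^ pred (nk eta (S k0)) *
  (INR (S k0) ^ 2 * b (S k0) t + INR (S k0) * conv b (S k0) t) /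
  (INR (S k0) ^ nk eta (S k0) * INR (fact (nk eta (S k0)))).

Lemma qfactor_derivable b t eta k0 : is_b b -> 0 < t ->
  derivable_pt_lim (fun s => qfactor b s eta k0) t (qfactor_deriv b t eta k0).
Proof.
  intros Hb Ht. unfold qfactor, bterm, qfactor_deriv. apply derivable_pt_lim_div_const.
  apply (derivable_pt_lim_comp (b (S k0)) (fun y => y ^ nk eta (S k0))).
  - apply b_derivable; auto; lia.
  - apply derivable_pt_lim_pow.
Qed.

Lemma qlaw_derivable b N eta t : is_b b -> 0 < t ->
  derivable_pt_lim (fun s => qlaw b N s eta) t
   (INR (fact N) * (- (INR N ^ 2) * exp (- (INR N ^ 2) * t) * prodR (qfactor b t eta) N
       + exp (- (INR N ^ 2) * t) *
         sumR (fun m0 =>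
           prodR (fun k => if Nat.eq_dec k m0 then qfactor_deriv b t eta k else qfactor b t eta k) N) N)).
Proof.
  intros Hb Ht. unfold qlaw.
  set (D := sumR (fun m0 =>
    prodR (fun k => if Nat.eq_dec k m0 then qfactor_deriv b t eta k else qfactor b t eta k) N) N).
  replace (INR (fact N) * (- (INR N ^ 2) * exp (- (INR N ^ 2) * t) * prodR (qfactor b t eta) N
       + exp (- (INR N ^ 2) * t) * D)) with
    ((INR (fact N) * (- (INR N ^ 2) * exp (- (INR N ^ 2) * t))) * prodR (qfactor b t eta) N +
     (INR (fact N) * exp (- (INR N ^ 2) * t)) * D) by ring.
  apply (derivable_pt_lim_mult (fun s => INR (fact N) * exp (- (INR N ^ 2) * s))
    (fun s => prodR (qfactor b s eta) N)).
  - apply (derivable_pt_lim_scal (fun s => exp (- (INR N ^ 2) * s))). apply derivable_pt_lim_exp_lin.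
  - unfold D. apply (prodR_derivable_pt_lim (fun s => qfactor b s eta)). intros; apply qfactor_derivable; auto.
Qed.

Lemma qfactor_deriv_decomp b t eta k0 : qfactor_deriv b t eta k0 =
  INR (S k0) ^ 2 * INR (nk eta (S k0)) * qfactor b t eta k0 +
  sumR (fun i => if Nat.leb 1 i then inflow_factor b t eta i (S k0 - i) else 0) (S k0).
Proof.
  set (n := nk eta (S k0)). set (c := INR (S k0) ^ n * INR (fact n)).
  set (X := INR n * b (S k0) t ^ pred n * INR (S k0) / c).
  rewrite (sumR_ext _ (fun i => X * (if Nat.leb 1 i then b i t * b (S k0 - i)%nat t else 0))).
  2:{ intros i Hi. destruct (Nat.leb 1 i); [|ring].
      unfold inflow_factor, X, c, n. replace (i + (S k0 - i))%nat with (S k0) by lia. unfold Rdiv. ring. }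
  rewrite sumR_scal. fold (conv b (S k0) t). unfold qfactor_deriv, qfactor, bterm, X. fold n c.
  destruct n as [|n']; [simpl INR; unfold Rdiv; ring|].
  simpl pred. simpl pow. unfold Rdiv. ring.
Qed.

Lemma qlaw_deriv_sum b N t eta :
  sumR (fun m0 => prodR (fun k => if Nat.eq_dec k m0 then qfactor_deriv b t eta k else qfactor b t eta k) N) N =
  sumR (fun m0 => INR (S m0) ^ 2 * INR (nk eta (S m0))) N * prodR (qfactor b t eta) N +
  sumR (fun m0 => sumR (fun i => inflow_term b N t eta i (S m0 - i)) (S m0)) N.
Proof.
  rewrite <- sumR_scal_r, <- sumR_plus. apply sumR_ext. intros m0 Hm0.
  rewrite (prodR_ext _ (fun k => if Nat.eq_dec k m0 then qfactor_deriv b t eta m0 else qfactor b t eta k))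
    by (intros k _; destruct (Nat.eq_dec k m0); subst; auto).
  rewrite prodR_update, qfactor_deriv_decomp by auto.
  rewrite <- prodR_off_nil, (prodR_off_cons m0 []) by (auto; intros []).
  rewrite Rmult_plus_distr_r, <- sumR_scal_r. f_equal; [ring|].
  apply sumR_ext. intros i Hi. unfold inflow_term.
  destruct (Nat.leb 1 i) eqn:E1; [apply Nat.leb_le in E1|simpl; ring].
  replace (true && Nat.leb 1 (S m0 - i) && Nat.leb (i + (S m0 - i)) N)%bool with true
    by (symmetry; rewrite !andb_true_iff, !Nat.leb_le; lia).
  replace (i + (S m0 - i) - 1)%nat with m0 by lia.
  rewrite prodR_update by auto. reflexivity.
Qed.

Lemma sum_pairs_antidiag N (W : nat -> nat -> R) :
  (forall i j, W i j = W j i) -> (forall j, W 0%nat j = 0) -> (forall i j, (N < i + j)%nat -> W i j = 0) ->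
  sum_pairs N (fun i j => pair_mult i j * W i j) =
  sumR (fun m0 => sumR (fun i => W i (S m0 - i)%nat) (S (S m0))) N.
Proof.
  intros Hsym HW0 HWN. unfold sum_pairs.
  rewrite (sumR_ext _ (fun i => sumR (fun j => if Nat.leb i j then pair_mult i j * W i j else 0) (S N))).
  2:{ intros i _. apply sumR_ext. intros j _. destruct (pair_ok N i j) eqn:Ep.
      - apply pair_ok_iff in Ep. replace (Nat.leb i j) with true by (symmetry; apply Nat.leb_le; lia). auto.
      - destruct (Nat.leb i j) eqn:Eij; auto. apply Nat.leb_le in Eij.
        destruct (Nat.eq_dec i 0) as [->|Hi0]; [rewrite HW0; ring|].
        rewrite HWN; [ring|]. destruct (Nat.le_gt_cases (i + j) N); auto.
        assert (pair_ok N i j = true) by (apply pair_ok_iff; lia). congruence. }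
  rewrite <- (sumR_sym W) by auto.
  rewrite (sumR_ext _ (fun i => sumR (fun j => if Nat.ltb (i + j) (S N) then W i j else 0) (S N))).
  2:{ intros i _. apply sumR_ext. intros j _. destruct (Nat.ltb (i + j) (S N)) eqn:E; auto.
      apply Nat.ltb_ge in E. apply HWN. lia. }
  rewrite sumR_antidiag, sumR_shift. simpl (sumR _ 1). rewrite HW0. ring.
Qed.

Lemma outflow_sum b N t eta : In eta (Omega N) ->
  sum_list (Omega N) (fun xi => ind_eq xi eta * (qlaw b N t xi * sum_pairs N (fun i j => rate psi_mult xi i j))) =
  qlaw b N t eta * (INR N ^ 2 - sumR (fun m0 => INR (S m0) ^ 2 * INR (nk eta (S m0))) N).
Proof.
  intros HO. rewrite sum_list_ind_eq by (auto using NoDup_Omega).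
  rewrite total_rate_mult, sumR_shift by auto. simpl (INR 0). do 2 f_equal. ring.
Qed.

Lemma inflow_sum b N t eta : In eta (Omega N) ->
  sum_list (Omega N) (fun xi => qlaw b N t xi * sum_pairs N (fun i j => rate psi_mult xi i j * ind_eq (merge xi i j) eta)) =
  INR (fact N) * exp (- (INR N ^ 2) * t) *
  sumR (fun m0 => sumR (fun i => inflow_term b N t eta i (S m0 - i)) (S m0)) N.
Proof.
  intros HO. unfold sum_pairs.
  rewrite (sum_list_ext _ _ (fun xi => sumR (fun i => sumR (fun j =>
      if pair_ok N i j then qlaw b N t xi * (rate psi_mult xi i j * ind_eq (merge xi i j) eta) else 0) (S N)) (S N))).
  2:{ intros xi _. rewrite <- sumR_scal. apply sumR_ext. intros i _. rewrite <- sumR_scal.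
      apply sumR_ext. intros j _. destruct (pair_ok N i j); ring. }
  rewrite sum_list_sumR2.
  rewrite (sumR_ext _ (fun i => sumR (fun j => if pair_ok N i j then
      INR (fact N) * exp (- (INR N ^ 2) * t) * (pair_mult i j * inflow_term b N t eta i j) else 0) (S N))).
  2:{ intros i _. apply sumR_ext. intros j _. destruct (pair_ok N i j) eqn:Ep; [|apply sum_list_zero].
      rewrite inflow_mult by auto. ring. }
  rewrite (sumR_ext _ (fun i => INR (fact N) * exp (- (INR N ^ 2) * t) *
      sumR (fun j => if pair_ok N i j then pair_mult i j * inflow_term b N t eta i j else 0) (S N))).
  2:{ intros i _. rewrite <- sumR_scal. apply sumR_ext. intros j _. destruct (pair_ok N i j); ring. }
  rewrite sumR_scal. f_equal.
  fold (sum_pairs N (fun i j => pair_mult i j * inflow_term b N t eta i j)).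
  rewrite (sum_pairs_antidiag N (inflow_term b N t eta)).
  - apply sumR_ext. intros m0 _. rewrite sumR_S. replace (S m0 - S m0)%nat with 0%nat by lia.
    unfold inflow_term at 2. rewrite andb_false_r. simpl. ring.
  - apply inflow_term_sym.
  - intros j. reflexivity.
  - intros i j Hij. unfold inflow_term.
    replace (Nat.leb (i + j) N) with false by (symmetry; apply Nat.leb_gt; lia).
    rewrite andb_false_r. reflexivity.
Qed.

Lemma qlaw_forward b N eta t : is_b b -> In eta (Omega N) -> 0 < t ->
  derivable_pt_lim (fun s => qlaw b N s eta) t
    (sum_list (Omega N) (fun xi => qlaw b N t xi * Qgen psi_mult N xi eta)).
Proof.
  intros Hb HO Ht.
  replace (sum_list (Omega N) (fun xi => qlaw b N t xi * Qgen psi_mult N xi eta)) with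
    (INR (fact N) * (- (INR N ^ 2) * exp (- (INR N ^ 2) * t) * prodR (qfactor b t eta) N
       + exp (- (INR N ^ 2) * t) *
         sumR (fun m0 =>
           prodR (fun k => if Nat.eq_dec k m0 then qfactor_deriv b t eta k else qfactor b t eta k) N) N)).
  - apply qlaw_derivable; auto.
  - unfold Qgen.
    rewrite (sum_list_ext _ _ (fun xi => qlaw b N t xi *
       sum_pairs N (fun i j => rate psi_mult xi i j * ind_eq (merge xi i j) eta) +
       (-1) * (ind_eq xi eta * (qlaw b N t xi * sum_pairs N (fun i j => rate psi_mult xi i j)))))
      by (intros; ring).
    rewrite sum_list_plus, sum_list_scal, inflow_sum, outflow_sum, qlaw_deriv_sum by auto.
    unfold qlaw. ring.
Qed.

Lemma Omega_init_state N x : (1 <= N)%nat -> In x (Omega N) ->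
  (forall k, (1 <= k < N)%nat -> nth k x 0%nat = 0%nat) -> x = init_state N.
Proof.
  intros HN HO Hz. apply in_Omega_iff in HO. destruct HO as [HL HW].
  apply nth_ext with 0%nat 0%nat; [rewrite length_init; auto|].
  intros [|p] Hp; [|rewrite nth_init by lia; apply Hz; lia].
  unfold init_state. simpl nth.
  pose proof (weight_sumR x) as W. rewrite HW, HL in W.
  destruct N as [|N']; [lia|]. rewrite sumR_shift, sumR_zero in W.
  - change (INR (S 0)) with 1 in W. apply INR_eq. lra.
  - intros k Hk. rewrite Hz by lia. simpl; ring.
Qed.

Lemma qlaw_0 b N x : is_b b -> (1 <= N)%nat -> In x (Omega N) ->
  qlaw b N 0 x = ind_eq x (init_state N).
Proof.
  intros Hb HN HO.
  unfold qlaw. rewrite Rmult_0_r, exp_0, Rmult_1_r.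
  unfold ind_eq. destruct (list_eq_dec Nat.eq_dec x (init_state N)) as [->|Hne].
  - rewrite (prodR_split _ N 0) by lia. rewrite prodR_one.
    + rewrite qfactor_nth. replace (nth 0 (init_state N) 0%nat) with N by reflexivity. unfold bterm.
      rewrite (proj1 Hb 0), exp_0, pow1 by lra. change (INR 1) with 1. rewrite pow1.
      field. apply INR_fact_neq_0.
    + intros k Hk. destruct (Nat.eq_dec k 0); [auto|].
      rewrite qfactor_nth, nth_init by lia. unfold bterm. simpl. field.
  - destruct (classic (exists k, (1 <= k < N)%nat /\ nth k x 0%nat <> 0%nat)) as [[k [Hk Hn]]|Hno].
    + rewrite (prodR_zero _ N k); [ring | lia |].
      rewrite qfactor_nth. unfold bterm. rewrite b_0 by (auto; lia).
      destruct (nth k x 0%nat); [lia|]. simpl. unfold Rdiv. ring.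
    + exfalso. apply Hne, Omega_init_state; auto.
      intros k Hk. destruct (Nat.eq_dec (nth k x 0%nat) 0); auto. exfalso; eauto.
Qed.

Lemma qlaw_clamp_continuity_pt0 b N x : is_b b ->
  continuity_pt (fun s => qlaw b N (Rmax 0 s) x) 0.
Proof.
  intros Hb. unfold qlaw.
  apply (continuity_pt_mult (fun s => INR (fact N) * exp (- (INR N ^ 2) * Rmax 0 s))
           (fun s => prodR (qfactor b (Rmax 0 s) x) N)).
  - apply (continuity_pt_mult (fun _ => INR (fact N)) (fun s => exp (- (INR N ^ 2) * Rmax 0 s))).
    + apply continuity_pt_const. intros ? ?; reflexivity.
    + apply (continuity_pt_comp (fun s => Rmax 0 s) (fun y => exp (- (INR N ^ 2) * y))).
      * apply Rmax0_continuity_pt.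
      * apply derivable_continuous_pt. eexists. apply derivable_pt_lim_exp_lin.
  - apply (prodR_continuity_pt (fun s => qfactor b (Rmax 0 s) x)). intros k0 _. unfold qfactor, bterm.
    apply (continuity_pt_mult (fun s => b (S k0) (Rmax 0 s) ^ nk x (S k0))
      (fun _ => / (INR (S k0) ^ nk x (S k0) * INR (fact (nk x (S k0)))))).
    + apply (continuity_pt_comp (fun s => b (S k0) (Rmax 0 s)) (fun y => y ^ nk x (S k0))).
      * apply b_clamp_continuity_pt0; auto; lia.
      * apply derivable_continuous_pt. eexists. apply derivable_pt_lim_pow.
    + apply continuity_pt_const. intros ? ?; reflexivity.
Qed.

Theorem mainTheorem6 :
  forall b : nat -> R -> R, is_b b ->
  forall (N : nat), (1 <= N)%nat ->
  forall p : R -> list nat -> R, is_law psi_mult N (init_state N) p ->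
  forall (t : R) (eta : list nat), 0 <= t -> in_Omega N eta ->
    p t eta =
      INR (fact N) * exp (- (INR N ^ 2) * t) *
      prodR (fun k0 => let k := S k0 in
               b k t ^ nk eta k / (INR k ^ nk eta k * INR (fact (nk eta k)))) N.
Proof.
  intros b Hb N HN p [Hp0 Hpd] t eta Ht Heta.
  change (p t eta = qlaw b N t eta).
  rewrite <- (Rmax_right 0 t) at 2 by lra.
  apply (forward_equation_unique (Omega N) (Qgen psi_mult N) p (fun s => qlaw b N (Rmax 0 s)));
    [auto | | | | | apply in_Omega_iff; auto | auto].
  - intros x c Hx Hc. rewrite Rmax_right by lra.
    apply (derivable_pt_lim_locally_ext (fun s => qlaw b N s x)) with (a := 0) (b := c + 1); [lra| |].
    + intros s Hs. rewrite Rmax_right by lra. reflexivity.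
    + apply qlaw_forward; auto.
  - intros x Hx. apply derivable_continuous_pt. eexists. apply Hpd; auto.
  - intros x Hx. apply qlaw_clamp_continuity_pt0; auto.
  - intros x Hx. rewrite Hp0, Rmax_left, qlaw_0; auto; lra.
Qed.
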